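(* Let $f(\mathbf z,\bar{\mathbf z})$ be a convenient mixed function of $n$ variables. (1) If $f$ is of polar positive weighted homogeneous face type, then for every weight vector $P$, the face function $f_P$ is a polar weighted homogeneous polynomial. (2) If $f$ is of strongly polar positive weighted homogeneous face type, then for every weight vector $P$, the face function $f_P$ is a strongly polar positive weighted homogeneous polynomial (with respect to the weight $P$).
   Context: A mixed function is a convergent series $f(\mathbf z,\bar{\mathbf z})=\sum_{\nu,\mu}c_{\nu,\mu}\mathbf z^\nu\bar{\mathbf z}^\mu$, $\nu,\mu\in\mathbb Z_{\ge0}^n$. Its Newton polyhedron $\Gamma_+(f)$ is the convex hull of $\bigcup_{c_{\nu,\mu}\ne0}\big((\nu+\mu)+\mathbb R_{\ge0}^n\big)$, and $\Gamma(f)$ is the union of its compact faces. $f$ is convenient if $\Gamma(f)$ meets every coordinate axis. A weight vector is $P=(p_1,\dots,p_n)$ with positive integers $p_j$; $d(P;f)=\min\{\sum_j p_j\xi_j:\xi\in\Gamma_+(f)\}$, $\Delta(P)=\{\xi\in\Gamma_+(f):\sum_jp_j\xi_j=d(P;f)\}$, and the face function is $f_P=\sum_{\nu+\mu\in\Delta(P)}c_{\nu,\mu}\mathbf z^\nu\bar{\mathbf z}^\mu$. A mixed polynomial $h$ is polar weighted homogeneous if there exist positive integer vectors $Q$ (radial weight) and $P'$ (polar weight) and non-zero integers $m_r,m_p$ with $\sum_j q_j(\nu_j+\mu_j)=m_r$, $\sum_jp'_j(\nu_j-\mu_j)=m_p$ for all monomials of $h$; $m_p$ is its polar degree. It is strongly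 polar positive weighted homogeneous (with weight $P$) if this holds with $Q=P'=P$ and $m_p>0$. $f$ is of polar positive weighted homogeneous face type if for every $P$ with $\dim\Delta(P)=n-1$, $f_P$ is polar weighted homogeneous for some polar weight $P'$ with positive polar degree; it is of strongly polar positive weighted homogeneous face type if for every $P$ with $\dim\Delta(P)=n-1$, $f_P$ is strongly polar positive weighted homogeneous with weight $P$ itself. *)

From HB Require Import structures.
From mathcomp Require Import all_boot all_order all_algebra.
From mathcomp Require Import all_classical all_reals all_analysis.
Set Implicit Arguments. Unset Strict Implicit. Unset Printing Implicit Defensive.
Import Order.TTheory GRing.Theory Num.Theory.
Import numFieldNormedType.Exports.
Local Open Scope classical_set_scope.
Local Open Scope ring_scope.

Definition mindex (n : nat) := 'I_n -> nat.

(* A mixed function f(z, zbar) = sum c_{nu,mu} z^nu zbar^mu is given by its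
   coefficient family c : (nu, mu) |-> c_{nu,mu}. *)
Definition mcoef (C : Type) (n : nat) := mindex n -> mindex n -> C.

Section Defs.
Variable C : numClosedFieldType.
Variable R : realType.
Variable n : nat.

(* convergence of the series in some polydisc: Cauchy-type bound *)
Definition mconvergent (c : mcoef C n) : Prop :=
  exists r M : C, 0 < r /\
    forall nu mu, `|c nu mu| * r ^+ (\sum_(j < n) (nu j + mu j))%N <= M.

Definition mpolynomial (c : mcoef C n) : Prop :=
  finite_set [set p : mindex n * mindex n | c p.1 p.2 != 0].

Definition mpt (nu mu : mindex n) : 'rV[R]_n := \row_j ((nu j + mu j)%N)%:R.

Definition dotr (a x : 'rV[R]_n) : R := \sum_(j < n) a 0 j * x 0 j.

Definition weight (P : 'I_n -> nat) : Prop := forall j, (0 < P j)%N.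

Definition wvec (P : 'I_n -> nat) : 'rV[R]_n := \row_j (P j)%:R.

Definition orthants (c : mcoef C n) : set 'rV[R]_n :=
  [set y | exists nu mu, c nu mu != 0 /\ forall j, mpt nu mu 0 j <= y 0 j].

Definition convex_hull (S : set 'rV[R]_n) : set 'rV[R]_n :=
  [set x | exists (k : nat) (y : 'I_k -> 'rV[R]_n) (l : 'I_k -> R),
     (forall i, S (y i)) /\ (forall i, 0 <= l i) /\ \sum_(i < k) l i = 1 /\
     x = \sum_(i < k) l i *: y i].

Definition newton_poly (c : mcoef C n) : set 'rV[R]_n :=
  convex_hull (orthants c).

Definition is_face (c : mcoef C n) (F : set 'rV[R]_n) : Prop :=
  exists (a : 'rV[R]_n) (b : R),
    (forall eta, newton_poly c eta -> b <= dotr a eta) /\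
    F = [set xi | newton_poly c xi /\ dotr a xi = b].

Definition newton_boundary (c : mcoef C n) : set 'rV[R]_n :=
  [set xi | exists F, is_face c F /\ compact F /\ F xi].

Definition coord_axis (j : 'I_n) : set 'rV[R]_n :=
  [set xi | forall i, i != j -> xi 0 i = 0].

Definition convenient (c : mcoef C n) : Prop :=
  forall j, exists xi, newton_boundary c xi /\ coord_axis j xi.

Definition Delta (c : mcoef C n) (P : 'I_n -> nat) : set 'rV[R]_n :=
  [set xi | newton_poly c xi /\
     forall eta, newton_poly c eta -> dotr (wvec P) xi <= dotr (wvec P) eta].

(* affine dimension of S is at least k: S contains k+1 affinely independent
   points x0, x0 + X_1, ..., x0 + X_k *)
Definition affdim_ge (S : set 'rV[R]_n) (k : nat) : Prop :=
  exists (x0 : 'rV[R]_n) (X : 'M[R]_(k, n)),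
    S x0 /\ (forall i, S (x0 + row i X)) /\ \rank X = k.

Definition affdim_eq (S : set 'rV[R]_n) (k : nat) : Prop :=
  affdim_ge S k /\ ~ affdim_ge S k.+1.

Definition face_fun (c : mcoef C n) (P : 'I_n -> nat) : mcoef C n :=
  fun nu mu => if `[< Delta c P (mpt nu mu) >] then c nu mu else 0.

End Defs.

Arguments mpt {R n}.
Arguments orthants {C} R {n}.
Arguments newton_poly {C} R {n}.
Arguments is_face {C} R {n}.
Arguments newton_boundary {C} R {n}.
Arguments convenient {C} R {n}.
Arguments Delta {C} R {n}.
Arguments face_fun {C} R {n}.

Section Homog.
Variable C : numClosedFieldType.
Variable n : nat.

(* polar weighted homogeneous (radial weight Q, polar weight P',
   radial degree mr, polar degree mp, both nonzero integers) *)
Definition polar_wh_with (h : mcoef C n) (Q P' : 'I_n -> nat) (mr mp : int)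
  : Prop :=
  (forall j, (0 < Q j)%N) /\ (forall j, (0 < P' j)%N) /\
  mr != 0 /\ mp != 0 /\
  forall nu mu, h nu mu != 0 ->
    (\sum_(j < n) (Q j)%:Z * ((nu j)%:Z + (mu j)%:Z) = mr) /\
    (\sum_(j < n) (P' j)%:Z * ((nu j)%:Z - (mu j)%:Z) = mp).

Definition polar_wh (h : mcoef C n) : Prop :=
  exists Q P' mr mp, polar_wh_with h Q P' mr mp.

Definition polar_pos_wh (h : mcoef C n) : Prop :=
  exists Q P' mr mp, polar_wh_with h Q P' mr mp /\ 0 < mp.

Definition strongly_ppwh (P : 'I_n -> nat) (h : mcoef C n) : Prop :=
  exists mr mp, polar_wh_with h P P mr mp /\ 0 < mp.

Variable R : realType.

Definition ppwh_face_type (c : mcoef C n) : Prop :=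
  forall P, weight P -> affdim_eq (Delta R c P) n.-1 ->
    polar_pos_wh (face_fun R c P).

Definition sppwh_face_type (c : mcoef C n) : Prop :=
  forall P, weight P -> affdim_eq (Delta R c P) n.-1 ->
    strongly_ppwh P (face_fun R c P).

End Homog.

(* Every face Delta(P) of the Newton polyhedron lies in facets, and the sign of a linear
   form u supported on Delta(P) can be transported from P to such a facet weight Q.
   Tilt P to W - t D with D orthogonal to the monomials of the current face, stopping at
   the first t where a new monomial joins the face (convenience makes this t finite).
   Tilting in both directions +D and -D writes W as a positive combination of the two
   tilted weights, so the sign survives for one of them.  Each step raises the rank of
   the face; at rank n Cramer's rule makes the normal a positive multiple of an integer
   weight Q, and Delta(Q) is a facet containing Delta(P).
   Part (1) follows since the monomials of f_P are monomials of f_Q.  For part (2) the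
   radial degree of f_P is d(P;f) > 0, and its polar degree is constant on Delta(P) and
   positive because the corresponding linear forms vanish, resp. are positive, at every
   facet weight over Delta(P). *)

From HB Require Import structures.
From mathcomp Require Import all_boot all_order all_algebra.
From mathcomp Require Import all_classical all_reals all_analysis.
From mathcomp Require Import finmap ring lra zify.
Import Order.TTheory GRing.Theory Num.Theory.
Local Open Scope classical_set_scope.
Local Open Scope ring_scope.

Lemma finite_set_argmin {R : realDomainType} {T : Type} {A : set T} (f : T -> R) :
  finite_set A -> A !=set0 -> exists2 x, A x & forall y, A y -> f x <= f y.
Proof.
elim/Pchoice: T A f => T A f /finite_fsetP[X ->] [x0 /= x0X].
pose i0 : X := FSetSub x0X.
case: (@arg_minP _ _ _ i0 xpredT (fun i : X => f (val i)) isT) => i _ imin.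
by exists (val i) => [|y yX]; [exact: valP | exact: (imin (FSetSub yX))].
Qed.

Lemma finite_mindex_le n K : finite_set [set nu : mindex n | forall j, (nu j <= K)%N].
Proof.
apply: (sub_finite_set _ (finite_image (fun g : {ffun 'I_n -> 'I_K.+1} => fun j => nat_of_ord (g j))
  (@finite_finset _ [set: {ffun 'I_n -> 'I_K.+1}]))).
move=> nu nuK; exists [ffun j => inord (nu j)] => //.
by apply: funext => j; rewrite ffunE inordK // ltnS.
Qed.

Lemma finite_sublevel_argmin {R : realDomainType} {T : Type} (A : set T) (f : T -> R) x0 :
  A x0 -> finite_set (A `&` [set x | f x <= f x0]) ->
  exists2 x, A x & forall y, A y -> f x <= f y.
Proof.
move=> Ax0 /(finite_set_argmin f)/(_ (ex_intro _ x0 (conj Ax0 (lexx _)))) [x [Ax le_x0] xmin].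
exists x => // y Ay; case: (leP (f y) (f x0)) => [le_y|/ltW]; first exact: xmin.
exact: le_trans.
Qed.

Section DotProduct.
Context {R : realType} {n : nat}.
Implicit Types (a b x y : 'rV[R]_n) (nu mu : mindex n).

Definition pos_weight a := forall j, 0 < a 0 j.

Lemma dotr_mx a x : dotr a x = (x *m a^T) 0 0.
Proof. by rewrite /dotr mxE; apply: eq_bigr => j _; rewrite mxE mulrC. Qed.

Lemma dotr_row k (X : 'M[R]_(k, n)) a i : dotr a (row i X) = (X *m a^T) i 0.
Proof. by rewrite dotr_mx -row_mul mxE. Qed.

Lemma dotrC a x : dotr a x = dotr x a.
Proof. by apply: eq_bigr => j _; rewrite mulrC. Qed.

Lemma dotrDr a x y : dotr a (x + y) = dotr a x + dotr a y.
Proof. by rewrite !dotr_mx mulmxDl mxE. Qed.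

Lemma dotrZr a x k : dotr a (k *: x) = k * dotr a x.
Proof. by rewrite !dotr_mx -scalemxAl mxE. Qed.

Lemma dotrNr a x : dotr a (- x) = - dotr a x.
Proof. by rewrite -scaleN1r dotrZr mulN1r. Qed.

Lemma dotrBr a x y : dotr a (x - y) = dotr a x - dotr a y.
Proof. by rewrite dotrDr dotrNr. Qed.

Lemma dotrZl a x k : dotr (k *: a) x = k * dotr a x.
Proof. by rewrite dotrC dotrZr dotrC. Qed.

Lemma dotrNl a x : dotr (- a) x = - dotr a x.
Proof. by rewrite dotrC dotrNr dotrC. Qed.

Lemma dotrBZl a b x k : dotr (a - k *: b) x = dotr a x - k * dotr b x.
Proof. by rewrite dotrC dotrBr dotrZr !(dotrC x). Qed.

Lemma dotr0r a : dotr a 0 = 0.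
Proof. by rewrite -(scale0r 0) dotrZr mul0r. Qed.

Lemma dotr_sumr a k (l : 'I_k -> R) (y : 'I_k -> 'rV[R]_n) :
  dotr a (\sum_(i < k) l i *: y i) = \sum_(i < k) l i * dotr a (y i).
Proof.
elim/big_ind2: _ => [|x1 r1 x2 r2 <- <-|i _]; first exact: dotr0r.
  exact: dotrDr.
exact: dotrZr.
Qed.

Lemma ler_dotr {a x y} : (forall j, 0 <= a 0 j) -> (forall j, x 0 j <= y 0 j) ->
  dotr a x <= dotr a y.
Proof. by move=> a_ge0 xy; apply: ler_sum => j _; rewrite ler_wpM2l. Qed.

Lemma ler_term_dotr {a x} j : (forall j, 0 <= a 0 j) -> (forall j, 0 <= x 0 j) ->
  a 0 j * x 0 j <= dotr a x.
Proof.
move=> a_ge0 x_ge0; rewrite /dotr (bigD1 j) //= lerDl.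
by apply: sumr_ge0 => i _; apply: mulr_ge0.
Qed.

Lemma mpt_ge0 nu mu j : 0 <= mpt nu mu 0 j :> R.
Proof. by rewrite mxE. Qed.

Lemma wvec_gt0 {P} : weight P -> pos_weight (wvec R P).
Proof. by move=> wP j; rewrite mxE ltr0n. Qed.

Lemma finite_dotr_mpt_le a d : pos_weight a ->
  finite_set [set p : mindex n * mindex n | dotr a (mpt p.1 p.2) <= d].
Proof.
move=> a_gt0; pose K := (\max_(j < n) Num.truncn (d / a ord0 j))%N.
apply: (sub_finite_set _ (finite_setX (finite_mindex_le n K) (finite_mindex_le n K))).
have sumK p j : dotr a (mpt p.1 p.2) <= d -> (p.1 j + p.2 j <= K)%N.
  move=> le_d; apply: leq_trans (leq_bigmax_cond j isT).
  rewrite -[X in (X <= _)%N](@natrK R) le_truncn // ler_pdivlMr // mulrC.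
  apply: le_trans le_d; have := ler_term_dotr j (fun j => ltW (a_gt0 j)) (@mpt_ge0 p.1 p.2).
  by rewrite mxE.
move=> [nu mu] /= le_d; split => j /=;
  apply: leq_trans (sumK (nu, mu) j le_d); [exact: leq_addr | exact: leq_addl].
Qed.

End DotProduct.

Section NewtonPolyhedron.
Context {R : realType} {C : numClosedFieldType} {n : nat} (c : mcoef C n).
Implicit Types (W V : 'rV[R]_n) (nu mu : mindex n).

Definition on_face W nu mu := c nu mu != 0 /\
  forall nu' mu', c nu' mu' != 0 -> dotr W (mpt nu mu) <= dotr W (mpt nu' mu').

Definition subface W V := forall nu mu, on_face W nu mu -> on_face V nu mu.

Lemma subface_scale W k : 0 < k -> subface W (k *: W).
Proof. by move=> k_gt0 nu mu [c_neq0 Wmin]; split => // ? ? ?; rewrite !dotrZl ler_pM2l ?Wmin. Qed.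

Lemma mpt_newton nu mu : c nu mu != 0 -> newton_poly R c (mpt nu mu).
Proof.
move=> c_neq0; exists 1%N, (fun _ => mpt nu mu), (fun _ => 1).
split; first by exists nu, mu.
by split=> [_|]; [exact: ler01 | rewrite !big_ord1 scale1r].
Qed.

Lemma newton_dotr_ge V eta : (forall j, 0 <= V 0 j) -> newton_poly R c eta ->
  exists nu mu, c nu mu != 0 /\ dotr V (mpt nu mu) <= dotr V eta.
Proof.
move=> V_ge0 [[|k] [y [l [y_orth [l_ge0 [l_sum1 ->]]]]]].
  by move/eqP: l_sum1; rewrite big_ord0 eq_sym oner_eq0.
have [i _ imin] := finite_set_argmin (fun i => dotr V (y i))
  (@finite_finset _ [set: 'I_k.+1]) (ex_intro _ ord0 I).
have [nu [mu [c_neq0 le_y]]] := y_orth i; exists nu, mu; split => //.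
apply: le_trans (ler_dotr V_ge0 le_y) _.
rewrite dotr_sumr -[X in X <= _]mul1r -l_sum1 mulr_suml.
by apply: ler_sum => i' _; rewrite ler_wpM2l ?imin.
Qed.

Lemma Delta_mptE P nu mu : c nu mu != 0 ->
  Delta R c P (mpt nu mu) <-> on_face (wvec R P) nu mu.
Proof.
move=> c_neq0; split=> [[_ Pmin]|[_ Pmin]].
  by split => // nu' mu' c'_neq0; apply/Pmin/mpt_newton.
split=> [|eta eta_newton]; first exact: mpt_newton.
have [|nu' [mu' [/Pmin le1 le2]]] := newton_dotr_ge (wvec R P) eta _ eta_newton.
  by move=> j; rewrite mxE.
exact: le_trans le1 le2.
Qed.

Lemma face_funE P nu mu : on_face (wvec R P) nu mu -> face_fun R c P nu mu = c nu mu.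
Proof.
by move=> [c_neq0 Pmin]; rewrite /face_fun asboolT //; apply/Delta_mptE.
Qed.

Lemma face_fun_neq0 P nu mu : face_fun R c P nu mu != 0 -> on_face (wvec R P) nu mu.
Proof.
rewrite /face_fun; case: asboolP => [Dm c_neq0|_]; last by rewrite eqxx.
exact/(Delta_mptE _ _ _ c_neq0).
Qed.

Lemma on_face_dotr_eq {W nu mu nu' mu'} : on_face W nu mu -> on_face W nu' mu' ->
  dotr W (mpt nu mu) = dotr W (mpt nu' mu').
Proof. by move=> [c1 min1] [c2 min2]; apply/eqP; rewrite eq_le min1 // min2. Qed.

Lemma convenient_axis : convenient R c -> forall j, exists2 xi : 'rV[R]_n,
  newton_poly R c xi & forall i, i != j -> xi 0 i = 0.
Proof.
move=> conv j; have [xi [[F [[a [b [_ ->]]] [_ [xi_newton _]]]] xi_axis]] := conv j.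
by exists xi.
Qed.

Hypothesis c00 : c (fun _ => 0%N) (fun _ => 0%N) = 0.

Lemma dotr_mpt_gt0 {W nu mu} : pos_weight W -> c nu mu != 0 -> 0 < dotr W (mpt nu mu).
Proof.
move=> W_gt0 c_neq0; have [j nu_mu_j] : exists j, (0 < nu j + mu j)%N.
  apply: contrapT => none; move: c_neq0.
  have nu_mu0 j : (nu j + mu j = 0)%N.
    by apply/eqP; rewrite -leqn0 leqNgt; apply/negP => ?; apply: none; exists j.
  suff [-> ->] : nu = (fun _ => 0%N) /\ mu = (fun _ => 0%N) by rewrite c00 eqxx.
  by split; apply: funext => j; have := nu_mu0 j; lia.
apply: lt_le_trans (ler_term_dotr j (fun j => ltW (W_gt0 j)) (@mpt_ge0 _ _ _ _)).
by rewrite mulr_gt0 // mxE ltr0n.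
Qed.

End NewtonPolyhedron.

Lemma tilt_limit {R : realType} {n} (W D : 'rV[R]_n) :
  pos_weight W -> (exists j, 0 < D 0 j) ->
  exists tp j0, [/\ 0 < tp, forall t, 0 <= t < tp -> pos_weight (W - t *: D),
    forall j, 0 <= (W - tp *: D) 0 j & (W - tp *: D) 0 j0 = 0].
Proof.
move=> W_gt0 [j1 Dj1].
have [j0 Dj0 j0min] := finite_set_argmin (fun j => W 0 j / D 0 j)
  (@finite_finset _ [set j | 0 < D 0 j]) (ex_intro _ j1 Dj1).
have tp_le j : 0 < D 0 j -> W 0 j0 / D 0 j0 * D 0 j <= W 0 j.
  by move=> Dj; rewrite -ler_pdivlMr //; exact: j0min.
have tp_gt0 : 0 < W 0 j0 / D 0 j0 by rewrite divr_gt0.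
exists (W 0 j0 / D 0 j0), j0; split => // [t /andP[t_ge0 t_lt] j|j|].
- rewrite !mxE; have := W_gt0 j; case: (ltP 0 (D 0 j)) => Dj; last by nra.
  by have := tp_le j Dj; nra.
- rewrite !mxE subr_ge0; case: (ltP 0 (D 0 j)) => [/tp_le //|Dj].
  by have := W_gt0 j; nra.
- by rewrite !mxE divfK ?subrr // gt_eqF.
Qed.

Section Tilting.
Context {R : realType} {C : numClosedFieldType} {n : nat} (c : mcoef C n).
Hypothesis c00 : c (fun _ => 0%N) (fun _ => 0%N) = 0.
Hypothesis axis : forall j : 'I_n, exists2 xi : 'rV[R]_n,
  newton_poly R c xi & forall i, i != j -> xi 0 i = 0.
Implicit Types (W D : 'rV[R]_n) (nu mu : mindex n).

Local Notation on_face := (on_face c).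

(* Convenience is used here: the Newton polyhedron meets the axis of [j0], where
   [W - tp D] vanishes, so some monomial has nonpositive [W - tp D]-value. *)
Lemma ex_tilt_witness {W D tp j0 nu0 mu0} : pos_weight W -> on_face W nu0 mu0 ->
  0 < tp -> (forall j, 0 <= (W - tp *: D) 0 j) -> (W - tp *: D) 0 j0 = 0 ->
  exists nu mu, [/\ c nu mu != 0, 0 < dotr D (mpt nu mu) &
    dotr W (mpt nu mu) - dotr W (mpt nu0 mu0) < tp * dotr D (mpt nu mu)].
Proof.
move=> W_gt0 [c0 W_min] tp_gt0 V_ge0 Vj0; have [xi xi_newton xi_axis] := axis j0.
have V_xi : dotr (W - tp *: D) xi = 0.
  apply: big1 => j _; case: (eqVneq j j0) => [->|ne]; first by rewrite Vj0 mul0r.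
  by rewrite xi_axis // mulr0.
have [nu [mu [c_neq0]]] := newton_dotr_ge c _ _ V_ge0 xi_newton.
rewrite V_xi dotrBZl subr_le0 => le_tp; exists nu, mu.
have := dotr_mpt_gt0 _ c00 W_gt0 c0; have := W_min _ _ c_neq0.
by split => //; nra.
Qed.

Lemma tilt_face {W D nu0 mu0} : pos_weight W -> on_face W nu0 mu0 ->
  (forall nu mu, on_face W nu mu -> dotr D (mpt nu mu) = 0) -> (exists j, 0 < D 0 j) ->
  exists2 t, 0 < t & [/\ pos_weight (W - t *: D),
    forall nu mu, on_face W nu mu -> on_face (W - t *: D) nu mu &
    exists nu mu, on_face (W - t *: D) nu mu /\ dotr D (mpt nu mu) != 0].
Proof.
move=> W_gt0 face0 D_face D_pos; set d := dotr W (mpt nu0 mu0).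
have d_le nu mu : c nu mu != 0 -> d <= dotr W (mpt nu mu) := face0.2 nu mu.
have [tp [j0 [tp_gt0 tilt_pos V_ge0 Vj0]]] := tilt_limit W D W_gt0 D_pos.
have [nu1 [mu1 [c1 D1 lt1]]] := ex_tilt_witness W_gt0 face0 tp_gt0 V_ge0 Vj0.
pose A := [set p : mindex n * mindex n | c p.1 p.2 != 0 /\ 0 < dotr D (mpt p.1 p.2)].
(* [tau p] is the tilt at which the monomial [p] comes down to the level [d] of the face
   of [W]; the least such tilt keeps that face and adds a monomial not orthogonal to [D]. *)
pose tau (p : mindex n * mindex n) :=
  (dotr W (mpt p.1 p.2) - d) / dotr D (mpt p.1 p.2).
have tau_ge0 p : A p -> 0 <= tau p.
  by move=> [cp Dp]; rewrite divr_ge0 ?subr_ge0 ?d_le ?ltW.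
have tau1_lt : tau (nu1, mu1) < tp by rewrite ltr_pdivrMr.
have [[nu mu] [cs Ds] tau_min] : exists2 p, A p & forall q, A q -> tau p <= tau q.
  apply: (@finite_sublevel_argmin _ _ _ _ (nu1, mu1)) => //.
  have tilt1_pos : pos_weight (W - tau (nu1, mu1) *: D).
    by apply: tilt_pos; rewrite tau1_lt (tau_ge0 (nu1, mu1)).
  apply: (sub_finite_set _ (finite_dotr_mpt_le _ d tilt1_pos)) => -[nu mu] [[cp Dp]] /=.
  by rewrite /tau /= ler_pdivrMr // dotrBZl; lra.
set t := tau (nu, mu).
have t_lt : t < tp by apply: le_lt_trans (tau_min (nu1, mu1) (conj c1 D1)) tau1_lt.
have tD : dotr W (mpt nu mu) - t * dotr D (mpt nu mu) = d.
  by rewrite /t /tau divfK ?gt_eqF //= opprB addrC subrK.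
have t_gt0 : 0 < t.
  rewrite lt_neqAle tau_ge0 ?andbT //; apply/eqP => t0.
  have Wm : dotr W (mpt nu mu) = d by rewrite -tD -t0 mul0r subr0.
  suff /D_face D0 : on_face W nu mu by rewrite D0 ltxx in Ds.
  by split => // nu' mu' c'; rewrite Wm d_le.
have tilt_ge nu' mu' : c nu' mu' != 0 -> d <= dotr (W - t *: D) (mpt nu' mu').
  move=> c'; rewrite dotrBZl; have := d_le _ _ c'.
  case: (ltP 0 (dotr D (mpt nu' mu'))) => D'; last by nra.
  by have := tau_min (nu', mu') (conj c' D'); rewrite ler_pdivlMr // -/t /=; lra.
exists t => //; split.
- by apply: tilt_pos; rewrite (ltW t_gt0) t_lt.
- move=> nu' mu' face'; split => [|nu'' mu'' c'']; first by case: face'.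
  by rewrite dotrBZl D_face // mulr0 subr0 (on_face_dotr_eq c face' face0) tilt_ge.
- exists nu, mu; split; last by rewrite gt_eqF.
  by split => // nu' mu' c'; rewrite dotrBZl tD tilt_ge.
Qed.

End Tilting.

Section AffineDimension.
Context {R : realType} {n : nat}.
Implicit Types (S : set 'rV[R]_n) (a : 'rV[R]_n).

Lemma affdim_ge_rows S k (X : 'M[R]_(k.+1, n)) :
  (forall i, S (row i X)) -> \rank X = k.+1 -> affdim_ge S k.
Proof.
move=> SX rX; pose x0 := row 0 X.
pose Y : 'M[R]_(k, n) := \matrix_i (row (lift 0 i) X - x0).
have x0Y i : x0 + row i Y = row (lift 0 i) X by rewrite rowK addrC subrK.
exists x0, Y; split; first exact: SX.
split => [i|]; first by rewrite x0Y.
apply/eqP; rewrite eqn_leq rank_leq_row -ltnS -rX.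
have X_sub : (X <= x0 + Y)%MS.
  apply/row_subP => i; case: (unliftP 0 i) => [i'|] ->; last exact: addsmxSl.
  by rewrite -x0Y addmx_sub_adds // row_sub.
apply: leq_trans (mxrankS X_sub) _; apply: leq_trans (mxrank_adds_leqif _ _).1 _.
by rewrite -[X in (_ <= X)%N]add1n leq_add2r rank_leq_row.
Qed.

Lemma not_affdim_ge_hyperplane S a b : a != 0 ->
  (forall x, S x -> dotr a x = b) -> ~ affdim_ge S n.
Proof.
move=> a_neq0 S_hyp [x0 [Y [Sx0 [SY rY]]]].
suff a0 : a = 0 by rewrite a0 eqxx in a_neq0.
have Y_unit : Y \in unitmx by rewrite -row_free_unit /row_free rY.
have YaT : Y *m a^T = 0.
  apply/matrixP => i j; rewrite (ord1 j) [RHS]mxE -dotr_row.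
  by have := S_hyp _ (SY i); rewrite dotrDr S_hyp //; lra.
by apply: trmx_inj; rewrite -(mulKmx Y_unit a^T) YaT mulmx0 trmx0.
Qed.

End AffineDimension.

(* A positive normal to [n] linearly independent integer points can be rescaled to a
   positive integer weight; Cramer's rule makes it proportional to [adj X *m 1]. *)
Lemma int_rows_normal_weight {R : realType} {n : nat} (X : 'M[int]_n) (W : 'rV[R]_n) d :
  pos_weight W -> d != 0 -> (map_mx intr X : 'M[R]_n) \in unitmx ->
  map_mx intr X *m W^T = const_mx d ->
  exists2 Q, weight Q & exists2 k, 0 < k & wvec R Q = k *: W.
Proof.
move=> W_gt0 d_neq0 X_unit XW; set XR := (map_mx intr X : 'M[R]_n).
have det_neq0 : \det XR != 0 by rewrite -unitfE -unitmxE.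
pose q : 'cV[int]_n := \adj X *m const_mx 1.
pose lam := d / \det XR.
have WT : W^T = lam *: map_mx intr q.
  apply: (can_inj (mulKmx X_unit)); rewrite XW -scalemxAr map_mxM map_const_mx.
  rewrite rmorph1 map_mx_adj mulmxA mul_mx_adj mul_scalar_mx !scalemx_const.
  by rewrite mulr1 divfK.
have Wj j : W 0 j = lam * (q j 0)%:~R.
  by have := congr1 (fun M : 'cV[R]_n => M j 0) WT; rewrite !mxE.
have lam_neq0 : lam != 0 by rewrite mulf_neq0 ?invr_eq0.
pose Q j := `|q j ord0|%N; exists Q => [j|].
  by rewrite /Q absz_gt0; apply: contraTneq (W_gt0 j) => q0; rewrite Wj q0 mulr0 ltxx.
exists `|lam|^-1; first by rewrite invr_gt0 normr_gt0.
apply/rowP => j; rewrite !mxE /Q natr_absz intr_norm.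
by rewrite -[W 0 j]ger0_norm ?ltW // Wj [X in _ * X]normrM mulKf ?normr_eq0.
Qed.

Lemma mxrank_col_mx_notin {F : fieldType} {k m} (v : 'rV[F]_m) (X : 'M[F]_(k, m)) :
  ~~ (v <= X)%MS -> \rank (col_mx v X) = (\rank X).+1.
Proof.
move=> vX; rewrite -addsmxE; apply/eqP; rewrite eqn_leq.
have := mxrank_leqif_sup (addsmxSr v X); rewrite addsmx_sub submx_refl andbT (negbTE vX).
move=> /ltn_leqif ->; rewrite andbT -[X in (_ <= X)%N]add1n.
by apply: leq_trans (mxrank_adds_leqif v X).1 _; rewrite leq_add2r rank_leq_row.
Qed.

Lemma forall_row_col_mx {T : Type} {k m} (Pr : 'rV[T]_m -> Prop) v (X : 'M[T]_(k, m)) :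
  Pr v -> (forall i, Pr (row i X)) -> forall i, Pr (row i (col_mx v X)).
Proof.
move=> Pv PX i; rewrite -(splitK i); case: (fintype.split i) => j /=; last by rewrite rowKd.
by rewrite rowKu (ord1 j) row_id.
Qed.

Lemma ex_rV_kermx {F : fieldType} {k m} (X : 'M[F]_(k, m)) :
  (\rank X < m)%N -> exists2 D : 'rV_m, D != 0 & X *m D^T = 0.
Proof.
move=> rX; have : kermx X^T != 0.
  by rewrite -mxrank_eq0 mxrank_ker mxrank_tr subn_eq0 -ltnNge.
case/rowV0Pn => D /sub_kermxP D_ker D_neq0; exists D => //.
by apply: trmx_inj; rewrite trmx_mul trmxK D_ker trmx0.
Qed.

Lemma dotr_submx_eq0 {R : realType} {k n} (X : 'M[R]_(k, n)) (D x : 'rV_n) :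
  X *m D^T = 0 -> (x <= X)%MS -> dotr D x = 0.
Proof. by move=> XD /submxP[w ->]; rewrite dotr_mx -mulmxA XD mulmx0 mxE. Qed.

Section Facets.
Context {R : realType} {C : numClosedFieldType} {n' : nat} (c : mcoef C n'.+1).
Local Notation n := n'.+1.
Hypothesis c00 : c (fun _ => 0%N) (fun _ => 0%N) = 0.
Implicit Types (W : 'rV[R]_n) (nu mu : mindex n).

Local Notation on_face := (on_face c).

Definition face_rows W {k} (X : 'M[R]_(k, n)) :=
  forall i, exists nu mu, on_face W nu mu /\ row i X = mpt nu mu.

Lemma facet_of_face_rows {Q} {X : 'M[R]_n} : weight Q -> \rank X = n ->
  face_rows (wvec R Q) X -> affdim_eq (Delta R c Q) n.-1.
Proof.
move=> wQ rX X_face; have X_Delta i : Delta R c Q (row i X).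
  by have [nu [mu [face_m ->]]] := X_face i; apply/(Delta_mptE _ _ _ _ face_m.1).
split; first exact: affdim_ge_rows _ _ _ X_Delta rX.
apply: (@not_affdim_ge_hyperplane _ _ _ (wvec R Q) (dotr (wvec R Q) (row 0 X))).
  apply/negP => /eqP/rowP/(_ ord0)/eqP; rewrite !mxE pnatr_eq0 => /eqP Q0.
  by have := wQ ord0; rewrite Q0.
have [x0_newton x0_min] := X_Delta 0.
by move=> x [x_newton x_min]; apply/eqP; rewrite eq_le x_min // x0_min.
Qed.

Lemma face_rows_int_weight {W} {X : 'M[R]_n} : pos_weight W -> \rank X = n ->
  face_rows W X -> exists2 Q, weight Q & exists2 k, 0 < k & wvec R Q = k *: W.
Proof.
move=> W_gt0 rX X_face.
have face_pair i : exists p : mindex n * mindex n, on_face W p.1 p.2 /\ row i X = mpt p.1 p.2.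
  by have [nu [mu fm]] := X_face i; exists (nu, mu).
have [f fP] := choice face_pair.
pose Xz : 'M[int]_n := \matrix_(i, j) ((f i).1 j + (f i).2 j)%:Z.
have XzX : map_mx intr Xz = X.
  apply/matrixP => i j; have [_ /(congr1 (fun r : 'rV[R]_n => r 0 j))] := fP i.
  by rewrite !mxE.
have [face0 _] := fP 0.
apply: (int_rows_normal_weight Xz W (dotr W (mpt (f 0).1 (f 0).2)) W_gt0).
- by rewrite gt_eqF // (dotr_mpt_gt0 _ c00 W_gt0 face0.1).
- by rewrite XzX -row_free_unit /row_free rX.
apply/matrixP => i j; rewrite XzX (ord1 j) [RHS]mxE -dotr_row.
by have [face_i ->] := fP i; apply: (on_face_dotr_eq c face_i face0).
Qed.

End Facets.

Section ReachFacet.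
Context {R : realType} {C : numClosedFieldType} {n' : nat} (c : mcoef C n'.+1).
Local Notation n := n'.+1.
Hypothesis c00 : c (fun _ => 0%N) (fun _ => 0%N) = 0.
Hypothesis axis : forall j : 'I_n, exists2 xi : 'rV[R]_n,
  newton_poly R c xi & forall i, i != j -> xi 0 i = 0.
Implicit Types (W V D u : 'rV[R]_n) (nu mu : mindex n).

Local Notation on_face := (on_face c).
Local Notation subface := (subface c).
Local Notation face_rows := (face_rows c).

Definition face_supported W u :=
  forall j, u 0 j != 0 -> exists nu mu, on_face W nu mu /\ (mpt nu mu : 'rV[R]_n) 0 j != 0.

Definition facet_over W Q :=
  [/\ weight Q, affdim_eq (Delta R c Q) n.-1 & subface W (wvec R Q)].

Lemma face_supported_sub {W V u} : subface W V -> face_supported W u -> face_supported V u.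
Proof. by move=> WV u_W j /u_W[nu [mu [/WV face_m mj]]]; exists nu, mu. Qed.

Lemma face_supportedN W u : face_supported W u -> face_supported W (- u).
Proof. by move=> u_W j; rewrite mxE oppr_eq0 => /u_W. Qed.

Lemma face_supportedB W u v :
  face_supported W u -> face_supported W v -> face_supported W (u - v).
Proof.
move=> u_W v_W j; rewrite !mxE; have [uj0|/u_W //] := eqVneq (u 0 j) 0.
by rewrite uj0 sub0r oppr_eq0 => /v_W.
Qed.

Lemma dotr_face_supported_eq0 {W D u} : (forall j, 0 <= D 0 j) ->
  (forall nu mu, on_face W nu mu -> dotr D (mpt nu mu) = 0) ->
  face_supported W u -> dotr D u = 0.
Proof.
move=> D_ge0 D_face u_W; apply: big1 => j _.
have [->|/u_W[nu [mu [/D_face Dm mj]]]] := eqVneq (u 0 j) 0; first by rewrite mulr0.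
suff -> : D 0 j = 0 by rewrite mul0r.
have Dmj : D 0 j * mpt nu mu 0 j = 0.
  apply/eqP; rewrite eq_le mulr_ge0 ?mpt_ge0 // andbT -Dm.
  exact: ler_term_dotr j D_ge0 (@mpt_ge0 _ _ _ _).
by move/eqP: Dmj; rewrite mulf_eq0 (negbTE mj) orbF => /eqP.
Qed.

Variable S : R -> Prop.
Hypothesis S_scale : forall l x, 0 < l -> S x -> S (l * x).
Hypothesis S_split : forall a b y z, 0 < a -> 0 < b -> S (a * y + b * z) -> S y \/ S z.

Definition reaches_facet W u := exists2 Q, facet_over W Q & S (dotr (wvec R Q) u).

Lemma reaches_facet_sub {W V u} : subface W V -> reaches_facet V u -> reaches_facet W u.
Proof. by move=> WV [Q [wQ facetQ VQ] SQ]; exists Q => //; split => // nu mu /WV/VQ. Qed.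

Lemma reaches_facet_full {k} (X : 'M[R]_(k, n)) W u : (n <= k)%N -> pos_weight W ->
  \rank X = k -> face_rows W X -> S (dotr W u) -> reaches_facet W u.
Proof.
move=> n_le W_gt0 rX X_face SWu.
have k_eq : k = n by apply/eqP; rewrite eqn_leq n_le -rX rank_leq_col.
subst k; have [Q wQ [l l_gt0 QW]] := face_rows_int_weight c c00 W_gt0 rX X_face.
have WQ : subface W (wvec R Q) by rewrite QW; apply: subface_scale.
exists Q; last by rewrite QW dotrZl; apply: S_scale.
split=> //; apply: (facet_of_face_rows c wQ rX) => i.
by have [nu [mu [/WQ face_m ->]]] := X_face i; exists nu, mu.
Qed.

(* If [D] has no negative entry it vanishes on the support of [u], so a one-sided tilt
   keeps [dotr W u]; otherwise [W] is a positive combination of the tilts along [D] and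
   [-D], and [S] survives for one of them. *)
Lemma tilt_split {W D u nu0 mu0} : pos_weight W -> on_face W nu0 mu0 -> D != 0 ->
  (forall nu mu, on_face W nu mu -> dotr D (mpt nu mu) = 0) ->
  face_supported W u -> S (dotr W u) ->
  exists V, [/\ pos_weight V, subface W V, S (dotr V u) &
    exists nu mu, on_face V nu mu /\ dotr D (mpt nu mu) != 0].
Proof.
move=> W_gt0 face0; wlog D_pos : D / exists j, 0 < D 0 j.
  move=> tilt D_neq0 D_face u_W SWu.
  have [|D_npos] := pselect (exists j, 0 < D 0 j); first by move/tilt; apply.
  have ND_pos : exists j, 0 < (- D) 0 j.
    have /existsNP[j /eqP Dj] : ~ forall j, D 0 j = 0.
      by move=> D0; move/eqP: D_neq0; apply; apply/rowP => j; rewrite D0 mxE.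
    exists j; rewrite mxE oppr_gt0 lt_neqAle Dj leNgt /=.
    by apply/negP => Dj_gt0; apply: D_npos; exists j.
  have ND_face nu mu : on_face W nu mu -> dotr (- D) (mpt nu mu) = 0.
    by move/D_face; rewrite dotrNl => ->; rewrite oppr0.
  have [|V [V_gt0 WV SVu [nu [mu [face_m Dm]]]]] := tilt (- D) ND_pos _ ND_face u_W SWu.
    by rewrite oppr_eq0.
  by exists V; split => //; exists nu, mu; rewrite -oppr_eq0 -dotrNl.
move=> D_neq0 D_face u_W SWu.
have [t t_gt0 [Vt_gt0 WVt Vt_m]] := tilt_face c c00 axis W_gt0 face0 D_face D_pos.
have [D_ge0|/existsNP[j /negP]] := pselect (forall j, 0 <= D 0 j).
  exists (W - t *: D); split => //.
  by rewrite dotrBZl (dotr_face_supported_eq0 D_ge0 D_face u_W) mulr0 subr0.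
rewrite -ltNge => Dj_lt0.
have ND_face nu mu : on_face W nu mu -> dotr (- D) (mpt nu mu) = 0.
  by move/D_face; rewrite dotrNl => ->; rewrite oppr0.
have ND_pos : exists j, 0 < (- D) 0 j by exists j; rewrite mxE oppr_gt0.
have [s s_gt0 [Vs_gt0 WVs Vs_m]] := tilt_face c c00 axis W_gt0 face0 ND_face ND_pos.
have st_gt0 : 0 < s + t by rewrite addr_gt0.
have W_mix : dotr W u = s / (s + t) * dotr (W - t *: D) u + t / (s + t) * dotr (W - s *: - D) u.
  by rewrite !dotrBZl dotrNl; field; rewrite gt_eqF.
move: SWu; rewrite W_mix => /S_split[||S_t|S_s]; rewrite ?divr_gt0 //.
  by exists (W - t *: D).
exists (W - s *: - D); split => //.
by have [nu [mu [face_m Dm]]] := Vs_m; exists nu, mu; rewrite -oppr_eq0 -dotrNl.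
Qed.

Lemma face_rank_step {k} {X : 'M[R]_(k, n)} {W u nu0 mu0} : (k < n)%N ->
  pos_weight W -> on_face W nu0 mu0 -> \rank X = k -> face_rows W X ->
  face_supported W u -> S (dotr W u) ->
  exists V, [/\ pos_weight V, subface W V, S (dotr V u) &
    exists2 Y : 'M[R]_(k.+1, n), \rank Y = k.+1 & face_rows V Y].
Proof.
move=> k_lt W_gt0 face0 rX X_face u_W SWu.
have extend V nu mu : subface W V -> on_face V nu mu -> ~~ (mpt nu mu <= X)%MS ->
    exists2 Y : 'M[R]_(k.+1, n), \rank Y = k.+1 & face_rows V Y.
  move=> WV face_m mX; exists (col_mx (mpt nu mu) X); first by rewrite mxrank_col_mx_notin ?rX.
  apply: (forall_row_col_mx (fun r => exists nu mu, on_face V nu mu /\ r = mpt nu mu)).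
    by exists nu, mu.
  move=> i.
  by have [nu' [mu' [/WV face' ->]]] := X_face i; exists nu', mu'.
have [[nu [mu [face_m mX]]]|X_span] :=
  pselect (exists nu mu, on_face W nu mu /\ ~~ (mpt nu mu <= X)%MS).
  by exists W; split => //; apply: (extend W nu mu).
have [D D_neq0 XD] : exists2 D : 'rV[R]_n, D != 0 & X *m D^T = 0.
  by apply: ex_rV_kermx; rewrite rX.
have D_face nu mu : on_face W nu mu -> dotr D (mpt nu mu) = 0.
  move=> face_m; apply: (dotr_submx_eq0 X D (mpt nu mu) XD).
  by apply: contrapT => /negP mX; apply: X_span; exists nu, mu.
have [V [V_gt0 WV SVu [nu [mu [face_m Dm]]]]] := tilt_split W_gt0 face0 D_neq0 D_face u_W SWu.
exists V; split => //; apply: (extend V nu mu) => //.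
by apply: contra Dm => /(dotr_submx_eq0 X D _ XD) ->.
Qed.

Lemma reaches_facet_rank m k (X : 'M[R]_(k, n)) W u nu0 mu0 : (n - k <= m)%N ->
  pos_weight W -> on_face W nu0 mu0 -> \rank X = k -> face_rows W X ->
  face_supported W u -> S (dotr W u) -> reaches_facet W u.
Proof.
elim: m k X W => [|m IH] k X W k_m W_gt0 face0 rX X_face u_W SWu;
  have [k_lt|n_le] := ltnP k n; try exact: reaches_facet_full n_le W_gt0 rX X_face SWu.
  by move: k_m; rewrite leqn0 subn_eq0 leqNgt k_lt.
have [V [V_gt0 WV SVu [Y rY Y_face]]] := face_rank_step k_lt W_gt0 face0 rX X_face u_W SWu.
have k_m' : (n - k.+1 <= m)%N by rewrite subnS -ltnS prednK ?subn_gt0.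
exact: (reaches_facet_sub WV (IH _ Y V k_m' V_gt0 (WV _ _ face0) rY Y_face
  (face_supported_sub WV u_W) SVu)).
Qed.

Lemma reaches_facet_weight P u nu0 mu0 : weight P -> on_face (wvec R P) nu0 mu0 ->
  face_supported (wvec R P) u -> S (dotr (wvec R P) u) -> reaches_facet (wvec R P) u.
Proof.
move=> wP face0 u_P SPu.
apply: (@reaches_facet_rank n 0 0 _ _ _ _ _ (wvec_gt0 wP) face0 _ _ u_P SPu) => //.
  exact: mxrank0.
by case.
Qed.

End ReachFacet.

Lemma gt0_split {R : realDomainType} (a b y z : R) :
  0 < a -> 0 < b -> 0 < a * y + b * z -> 0 < y \/ 0 < z.
Proof.
move=> a_gt0 b_gt0 ayz; case: (ltP 0 y) => [|y_le0]; first by left.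
by case: (ltP 0 z) => [|z_le0]; [right | exfalso; nra].
Qed.

Lemma ge0_split {R : realDomainType} (a b y z : R) :
  0 < a -> 0 < b -> 0 <= a * y + b * z -> 0 <= y \/ 0 <= z.
Proof.
move=> a_gt0 b_gt0 ayz; case: (leP 0 y) => [|y_lt0]; first by left.
by case: (leP 0 z) => [|z_lt0]; [right | exfalso; nra].
Qed.

Section PolarWeights.
Context {C : numClosedFieldType} {n : nat}.
Implicit Types (h g : mcoef C n) (Q P : 'I_n -> nat).

Lemma polar_wh_with_sub h g Q P mr mp :
  (forall nu mu, g nu mu != 0 -> h nu mu != 0) ->
  polar_wh_with h Q P mr mp -> polar_wh_with g Q P mr mp.
Proof. by move=> gh [wQ [wP [mr0 [mp0 degs]]]]; do 4![split => //] => nu mu /gh/degs. Qed.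

Lemma polar_wh_with_nil h Q P mr mp : ~ (exists nu mu, h nu mu != 0) ->
  weight Q -> weight P -> mr != 0 -> mp != 0 -> polar_wh_with h Q P mr mp.
Proof.
by move=> h0 wQ wP mr0 mp0; do 4![split => //] => nu mu h_neq0; case: h0; exists nu, mu.
Qed.

End PolarWeights.

Section FaceFunctions.
Context {R : realType} {C : numClosedFieldType} {n' : nat} (c : mcoef C n'.+1).
Local Notation n := n'.+1.
Implicit Types (P Q : 'I_n -> nat) (nu mu : mindex n).

Local Notation on_face := (on_face c).
Local Notation subface := (subface c).
Local Notation face_supported := (face_supported c).
Local Notation facet_over := (facet_over c).

Lemma face_fun_mpolynomial P : weight P -> mpolynomial (face_fun R c P).
Proof.
move=> wP; have [[nu0 [mu0 /face_fun_neq0 face0]]|f0] :=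
  pselect (exists nu mu, face_fun R c P nu mu != 0); last first.
  by apply: (sub_finite_set _ (finite_set0 _)) => -[nu mu] /= f_neq0; apply: f0; exists nu, mu.
pose d := dotr (wvec R P) (mpt nu0 mu0).
apply: (sub_finite_set _ (finite_dotr_mpt_le _ d (wvec_gt0 wP))) => -[nu mu] /=.
by move=> /face_fun_neq0 face_m; rewrite (on_face_dotr_eq c face_m face0).
Qed.

Definition mdiff nu mu : 'rV[R]_n := \row_j ((nu j)%:R - (mu j)%:R).

Lemma radial_degreeE P nu mu :
  (\sum_(j < n) (P j)%:Z * ((nu j)%:Z + (mu j)%:Z))%:~R = dotr (wvec R P) (mpt nu mu).
Proof. by rewrite rmorph_sum; apply: eq_bigr => j _; rewrite rmorphM rmorphD /= !mxE natrD. Qed.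

Lemma polar_degreeE P nu mu :
  (\sum_(j < n) (P j)%:Z * ((nu j)%:Z - (mu j)%:Z))%:~R = dotr (wvec R P) (mdiff nu mu).
Proof. by rewrite rmorph_sum; apply: eq_bigr => j _; rewrite rmorphM rmorphB /= !mxE. Qed.

Hypothesis c00 : c (fun _ => 0%N) (fun _ => 0%N) = 0.
Hypothesis axis : forall j : 'I_n, exists2 xi : 'rV[R]_n,
  newton_poly R c xi & forall i, i != j -> xi 0 i = 0.

Lemma face_supported_mdiff {W nu mu} : on_face W nu mu -> face_supported W (mdiff nu mu).
Proof.
move=> face_m j; rewrite !mxE => m_j; exists nu, mu; split => //; rewrite mxE.
by apply: contra m_j; rewrite pnatr_eq0 addn_eq0 => /andP[/eqP-> /eqP->]; rewrite subrr.
Qed.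

Lemma dotr_eq0_of_facets {P u nu0 mu0} : weight P -> on_face (wvec R P) nu0 mu0 ->
  face_supported (wvec R P) u ->
  (forall Q, facet_over (wvec R P) Q -> dotr (wvec R Q) u = 0) -> dotr (wvec R P) u = 0.
Proof.
move=> wP face0 u_P u_facets.
have not_gt0 v : face_supported (wvec R P) v ->
    (forall Q, facet_over (wvec R P) Q -> dotr (wvec R Q) v = 0) -> ~ 0 < dotr (wvec R P) v.
  move=> v_P v_facets Pv; have [Q /v_facets -> ] := reaches_facet_weight c c00 axis
    (fun x => 0 < x) (@mulr_gt0 _) gt0_split _ _ _ _ wP face0 v_P Pv.
  by rewrite ltxx.
case: (ltgtP (dotr (wvec R P) u) 0) => // Pu; exfalso; last exact: (not_gt0 u).
apply: (not_gt0 (- u)); rewrite ?dotrNr ?oppr_gt0 //; first exact: face_supportedN.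
by move=> Q /u_facets; rewrite dotrNr => ->; rewrite oppr0.
Qed.

Lemma dotr_gt0_of_facets {P u nu0 mu0} : weight P -> on_face (wvec R P) nu0 mu0 ->
  face_supported (wvec R P) u ->
  (forall Q, facet_over (wvec R P) Q -> 0 < dotr (wvec R Q) u) -> 0 < dotr (wvec R P) u.
Proof.
move=> wP face0 u_P u_facets; rewrite ltNge; apply/negP => Pu_le0.
have [||Q /u_facets] := reaches_facet_weight c c00 axis (fun x => 0 <= x)
  (fun l x l_gt0 => mulr_ge0 (ltW l_gt0)) ge0_split _ (- u) _ _ wP face0.
- exact: face_supportedN.
- by rewrite /= dotrNr oppr_ge0.
by rewrite /= dotrNr oppr_ge0 leNgt => ->.
Qed.

Lemma face_fun_polar_wh P : ppwh_face_type R c -> weight P -> polar_wh (face_fun R c P).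
Proof.
move=> hpp wP; have [[nu0 [mu0 /face_fun_neq0 face0]]|f0] :=
  pselect (exists nu mu, face_fun R c P nu mu != 0); last first.
  by exists (fun _ => 1%N), (fun _ => 1%N), 1, 1; apply: polar_wh_with_nil.
have m0_supp : face_supported (wvec R P) (mpt nu0 mu0).
  by move=> j m0j; exists nu0, mu0.
have [Q [wQ facetQ PQ] _] := reaches_facet_weight c c00 axis (fun x => 0 < x)
  (@mulr_gt0 _) gt0_split _ _ _ _ wP face0 m0_supp (dotr_mpt_gt0 c c00 (wvec_gt0 wP) face0.1).
have [Q' [P' [mr [mp [hQ _]]]]] := hpp Q wQ facetQ.
exists Q', P', mr, mp; apply: polar_wh_with_sub hQ => nu mu /face_fun_neq0 face_m.
by rewrite face_funE; [case: face_m | exact: PQ].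
Qed.

Lemma facet_mdiff_const {Q} : sppwh_face_type R c -> weight Q ->
  affdim_eq (Delta R c Q) n.-1 -> exists2 mp, 0 < mp &
    forall nu mu, on_face (wvec R Q) nu mu -> dotr (wvec R Q) (mdiff nu mu) = mp.
Proof.
move=> hs wQ facetQ; have [mr [mp [[_ [_ [_ [_ degs]]]] mp_gt0]]] := hs Q wQ facetQ.
exists mp%:~R => [|nu mu face_m]; first by rewrite ltr0z.
by rewrite -polar_degreeE (degs _ _ _).2 // face_funE //; case: face_m.
Qed.

Lemma face_fun_sppwh P : sppwh_face_type R c -> weight P -> strongly_ppwh P (face_fun R c P).
Proof.
move=> hs wP; have [[nu0 [mu0 /face_fun_neq0 face0]]|f0] :=
  pselect (exists nu mu, face_fun R c P nu mu != 0); last first.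
  by exists 1, 1; split => //; apply: polar_wh_with_nil.
have mr_gt0 : 0 < dotr (wvec R P) (mpt nu0 mu0).
  by apply: (dotr_mpt_gt0 c c00 (wvec_gt0 wP)); case: face0.
have mp_gt0 : 0 < dotr (wvec R P) (mdiff nu0 mu0).
  apply: (dotr_gt0_of_facets wP face0 (face_supported_mdiff face0)) => Q [wQ facetQ PQ].
  by have [mp mp_gt0 mdiffQ] := facet_mdiff_const hs wQ facetQ; rewrite mdiffQ //; apply: PQ.
exists (\sum_(j < n) (P j)%:Z * ((nu0 j)%:Z + (mu0 j)%:Z)),
  (\sum_(j < n) (P j)%:Z * ((nu0 j)%:Z - (mu0 j)%:Z)).
rewrite -(ltr0z R) polar_degreeE; split => //; do 2![split => //].
split; first by rewrite -(intr_eq0 R) radial_degreeE (lt0r_neq0 mr_gt0).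
split; first by rewrite -(intr_eq0 R) polar_degreeE (lt0r_neq0 mp_gt0).
move=> nu mu /face_fun_neq0 face_m; split; apply: (@intr_inj R).
  by rewrite !radial_degreeE (on_face_dotr_eq c face_m face0).
rewrite !polar_degreeE; apply/eqP; rewrite -subr_eq0 -dotrBr; apply/eqP.
apply: (dotr_eq0_of_facets wP face0) => [|Q [wQ facetQ PQ]].
  by apply: face_supportedB; apply: face_supported_mdiff.
have [mp _ mdiffQ] := facet_mdiff_const hs wQ facetQ.
by rewrite dotrBr !mdiffQ ?subrr //; apply: PQ.
Qed.

End FaceFunctions.

Theorem proposition5 (R : realType) (C : numClosedFieldType) (n : nat)
  (c : mcoef C n) :
  (0 < n)%N ->
  mconvergent c ->
  c (fun _ => 0%N) (fun _ => 0%N) = 0 ->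
  convenient R c ->
  (ppwh_face_type R c ->
     forall P, weight P ->
       mpolynomial (face_fun R c P) /\ polar_wh (face_fun R c P)) /\
  (sppwh_face_type R c ->
     forall P, weight P ->
       mpolynomial (face_fun R c P) /\ strongly_ppwh P (face_fun R c P)).
Proof.
case: n c => [//|n'] c _ _ c00 /convenient_axis axis.
split=> [hpp|hs] P wP; split; first exact: face_fun_mpolynomial.
- exact: face_fun_polar_wh c c00 axis P hpp wP.
- exact: face_fun_mpolynomial.
- exact: face_fun_sppwh c c00 axis P hs wP.
Qed.
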